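(* In the setting described in the context, for every $j\in[\varepsilon^{-1}-1]$ and every $i\in I$ it holds that $\lambda^j_i\le1$ and $\gamma^j_i\le1$.
   Context: A CMK instance is $\mathcal{I}=(I,w,v,m,k)$ with $I$ a finite item set, $w:I\to[0,1]$, $v:I\to\mathbb{R}_{\ge0}$, $m,k\in\mathbb{N}_{>0}$. A configuration is $C\subseteq I$ with $|C|\le k$ and $\sum_{i\in C}w(i)\le1$; $\mathcal{C}$ is the set of configurations and $\mathcal{C}(i)=\{C\in\mathcal{C}:i\in C\}$. A solution is a tuple of $m$ configurations, with value $v$ of their union; $\mathrm{OPT}(\mathcal{I})$ is the maximum value. A fractional solution is $x\in\mathbb{R}_{\ge0}^{\mathcal{C}}$, with $\mathrm{cover}_i(x)=\sum_{C\in\mathcal{C}(i)}x_C$, $\|x\|=\sum_Cx_C$; it is feasible if $\mathrm{cover}(x)\in[0,1]^I$; for $y\in\mathbb{R}^I$, $v(y)=\sum_iy_iv(i)$, and $v(x)=v(\mathrm{cover}(x))$. For $S\subseteq I$ and $\ell\in\mathbb{N}$, $\mathrm{LP}(S,\ell)$ is: maximize $v(x)$ over feasible fractional solutions $x$ with $x_C=0$ whenever $C\not\subseteq S$, and $\|x\|=\ell$. For $\|x\|\ne0$, a random configuration $R$ is distributed by $x$ ($R\sim x$) if $\Pr(R=C)=x_C/\|x\|$. Given $\varepsilon\in(0,0.1)$, $\mathcal{I}$ is $\varepsilon$-simple if $m>\exp(\exp(\varepsilon^{-30}))$ and $\varepsilon m\in\mathbb{N}$. Iterative randomized rounding: let $\varepsilon\in(0,0.1)$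 with $\varepsilon^{-1/2}\in\mathbb{N}$ and $\mathcal{I}$ be $\varepsilon$-simple; let $q=\varepsilon m$ and $S_0=I$. For $j=1,\dots,\varepsilon^{-1}$: let $m_j=m(1-(j-1)\varepsilon)$; let $x^j$ be a $(1-\varepsilon)$-approximate solution of $\mathrm{LP}(S_{j-1},m_j)$ (a feasible solution of value at least $(1-\varepsilon)$ times its optimum), determined by the outcomes of the samples of previous iterations; sample independently $R^j_1,\dots,R^j_q\sim x^j$; set $S_j=S_{j-1}\setminus\bigcup_{b=1}^qR^j_b$. Let $\mathcal{F}_0$ be the trivial $\sigma$-algebra and $\mathcal{F}_j$ the $\sigma$-algebra generated by $\{R^{j'}_b: j'\le j,\ b\in[q]\}$. Fix an optimal solution $(C^*_1,\dots,C^*_m)$ and let $S^*=\bigcup_bC^*_b$ (so $v(S^* )=\mathrm{OPT}(\mathcal{I})$). Define $\gamma^0=\mathbb{1}_{S^*}\in\{0,1\}^I$ (indicator vector of $S^*$). For $j=1,\dots,\varepsilon^{-1}-1$ define $\lambda^j\in\mathbb{R}^I_{\ge0}$ by $\lambda^j_i=\frac{1-j\varepsilon}{1-(j-1)\varepsilon}\cdot\frac{1}{\Pr(i\in S_j\mid\mathcal{F}_{j-1})}\cdot\gamma^{j-1}_i$ for $i\in S_{j-1}$ (this conditional probability is positive for such $i$) and $\lambda^j_i=0$ for $i\notin S_{j-1}$; and define $\gamma^j_i=\mathbb{1}_{i\in S_j}\cdot\lambda^j_i$ for all $i\in I$. *)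

From mathcomp Require Import all_boot all_order all_algebra.
From mathcomp Require Import reals sequences.
Set Implicit Arguments. Unset Strict Implicit. Unset Printing Implicit Defensive.
Import Order.TTheory GRing.Theory Num.Theory.
Local Open Scope ring_scope.

Section CMK.
Variables (R : realType) (I : finType).

Definition config (w : I -> R) (k : nat) (C : {set I}) : bool :=
  (#|C| <= k)%N && (\sum_(i in C) w i <= 1).

(* a fractional solution is a vector indexed by configurations; we represent it
   as a function on all subsets that vanishes outside configurations *)
Definition cover (w : I -> R) (k : nat) (x : {set I} -> R) (i : I) : R :=
  \sum_(C : {set I} | config w k C && (i \in C)) x C.

Definition fnorm (w : I -> R) (k : nat) (x : {set I} -> R) : R :=
  \sum_(C : {set I} | config w k C) x C.

Definition vvec (v : I -> R) (y : I -> R) : R := \sum_i y i * v i.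
Definition vset (v : I -> R) (S : {set I}) : R := \sum_(i in S) v i.
Definition vfrac (w v : I -> R) (k : nat) (x : {set I} -> R) : R :=
  vvec v (cover w k x).

Definition is_frac (w : I -> R) (k : nat) (x : {set I} -> R) : Prop :=
  (forall C : {set I}, ~~ config w k C -> x C = 0) /\ (forall C : {set I}, 0 <= x C).

Definition feasible (w : I -> R) (k : nat) (x : {set I} -> R) : Prop :=
  is_frac w k x /\ (forall i, 0 <= cover w k x i <= 1).

Definition LP_feas (w : I -> R) (k : nat) (S : {set I}) (l : R)
  (x : {set I} -> R) : Prop :=
  feasible w k x /\ (forall C : {set I}, ~~ (C \subset S) -> x C = 0) /\ fnorm w k x = l.

Definition LP_approx (w v : I -> R) (k : nat) (eps : R) (S : {set I}) (l : R)
  (x : {set I} -> R) : Prop :=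
  LP_feas w k S l x /\
  forall y, LP_feas w k S l y -> (1 - eps) * vfrac w v k y <= vfrac w v k x.

(* outcomes: omega j b = R^j_b (iteration j >= 1, sample b < q) *)
Fixpoint Sset (q : nat) (omega : nat -> 'I_q -> {set I}) (j : nat) : {set I} :=
  match j with
  | 0 => setT
  | j'.+1 => Sset omega j' :\: \bigcup_(b < q) omega j'.+1 b
  end.

(* Pr(i \in S_j | F_{j-1}) at outcome omega: S_{j-1} is F_{j-1}-measurable and
   R^j_1..R^j_q are i.i.d. ~ x^j (x^j determined by the past) *)
Definition condP (w : I -> R) (k q : nat)
  (xpol : nat -> (nat -> 'I_q -> {set I}) -> {set I} -> R)
  (omega : nat -> 'I_q -> {set I}) (j : nat) (i : I) : R :=
  let x := xpol j omega in
  \sum_(t : {ffun 'I_q -> {set I}})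
     (\prod_(b < q) (x (t b) / fnorm w k x)) *
     (i \in Sset omega j.-1 :\: \bigcup_(b < q) t b)%:R.

Definition lamstep (w : I -> R) (k q : nat) (eps : R)
  (xpol : nat -> (nat -> 'I_q -> {set I}) -> {set I} -> R)
  (j : nat) (g : I -> R) (omega : nat -> 'I_q -> {set I}) (i : I) : R :=
  if i \in Sset omega j.-1 then
    (1 - j%:R * eps) / (1 - (j.-1)%:R * eps) / condP w k xpol omega j i * g i
  else 0.

Fixpoint gam (w : I -> R) (k q : nat) (eps : R)
  (xpol : nat -> (nat -> 'I_q -> {set I}) -> {set I} -> R)
  (Sstar : {set I}) (j : nat) (omega : nat -> 'I_q -> {set I}) (i : I) : R :=
  match j with
  | 0 => (i \in Sstar)%:R
  | j'.+1 => (i \in Sset omega j'.+1)%:R *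
             lamstep w k eps xpol j'.+1 (gam w k eps xpol Sstar j' omega) omega i
  end.

Definition lam (w : I -> R) (k q : nat) (eps : R)
  (xpol : nat -> (nat -> 'I_q -> {set I}) -> {set I} -> R)
  (Sstar : {set I}) (j : nat) (omega : nat -> 'I_q -> {set I}) (i : I) : R :=
  match j with
  | 0 => 0
  | j'.+1 => lamstep w k eps xpol j'.+1 (gam w k eps xpol Sstar j' omega) omega i
  end.

End CMK.

From Pilot Require Import Defs.
From mathcomp Require Import all_boot all_order all_algebra.
From mathcomp Require Import reals sequences.
From mathcomp Require Import ring lra zify.
Import Order.TTheory GRing.Theory Num.Theory.
Local Open Scope ring_scope.
Set Implicit Arguments. Unset Strict Implicit.

(* Since gamma^j_i = [i \in S_j] * lambda^j_i and
   lambda^j_i = r_j / Pr(i \in S_j | F_(j-1)) * gamma^(j-1)_i with the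
   shrinking factor r_j = (1 - j eps) / (1 - (j-1) eps), an induction on j
   reduces everything to the single estimate 0 < r_j <= Pr(i \in S_j | F_(j-1)).
   For a fractional solution x of norm F, [i] survives q independent samples
   from x with probability (1 - cover_i(x) / F)^q >= 1 - q / F by Bernoulli's
   inequality and cover_i(x) <= 1; for x = x^j we have q = eps m and
   F = m (1 - (j-1) eps), so 1 - q / F is exactly r_j. *)

Lemma bernoulli_ineq (R : realFieldType) (c : R) (n : nat) :
  c <= 1 -> 1 - n%:R * c <= (1 - c) ^+ n.
Proof.
move=> c_le1; elim: n => [|n IHn]; first by rewrite mul0r subr0 expr0.
have step : (1 - c) * (1 - n%:R * c) <= (1 - c) ^+ n.+1.
  by rewrite exprS; apply: ler_wpM2l; lra.
apply: le_trans step; rewrite -natr1.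
have : 0 <= n%:R * (c * c) :> R by rewrite mulr_ge0 // -expr2 sqr_ge0.
nra.
Qed.

Section FractionalSolution.
Variables (R : realType) (I : finType) (w : I -> R) (k : nat).
Variable x : {set I} -> R.
Hypothesis x_frac : is_frac w k x.

Lemma sum_frac_all : \sum_C x C = fnorm w k x.
Proof.
rewrite /fnorm (bigID (config w k)) /= [X in _ + X]big1 ?addr0 //.
by move=> C /x_frac.1.
Qed.

Lemma sum_frac_mem (i : I) : \sum_C x C * (i \in C)%:R = Defs.cover w k x i.
Proof.
rewrite /Defs.cover [RHS]big_mkcond /=; apply: eq_bigr => C _.
case: (boolP (config w k C)) => [_|/x_frac.1 ->]; last by rewrite mul0r; case: (i \in C).
by case: (i \in C); rewrite ?mulr1 ?mulr0.
Qed.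

Lemma sum_frac_avoid (i : I) :
  \sum_C x C * (i \notin C)%:R = fnorm w k x - Defs.cover w k x i.
Proof.
rewrite -sum_frac_all -sum_frac_mem -sumrB; apply: eq_bigr => C _.
by case: (i \in C); rewrite /= ?mulr0 ?mulr1 ?subr0 ?subrr.
Qed.

Lemma cover_le_fnorm (i : I) : Defs.cover w k x i <= fnorm w k x.
Proof.
rewrite -subr_ge0 -sum_frac_avoid; apply: sumr_ge0 => C _.
by rewrite mulr_ge0 ?x_frac.2.
Qed.

Lemma condP_closed (q : nat) (xpol : nat -> (nat -> 'I_q -> {set I}) -> {set I} -> R)
    (omega : nat -> 'I_q -> {set I}) (j : nat) (i : I) :
  xpol j omega = x -> i \in Sset omega j.-1 ->
  condP w k xpol omega j i = ((fnorm w k x - Defs.cover w k x i) / fnorm w k x) ^+ q.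
Proof.
move=> x_j i_alive; rewrite /condP x_j -sum_frac_avoid big_distrl /=.
rewrite -[q in _ ^+ q]card_ord -prodr_const bigA_distr_bigA /=.
apply: eq_bigr => t _; rewrite in_setD i_alive andbT.
case: (boolP (i \in \bigcup_(b < q) t b)) => [/bigcupP[b _ i_tb] | i_avoid] /=.
  by rewrite mulr0 (bigD1 b) //= i_tb /= mulr0 !mul0r.
rewrite mulr1; apply: eq_bigr => b _.
have -> : i \notin t b by apply: contra i_avoid => i_tb; apply/bigcupP; exists b.
by rewrite mulr1.
Qed.

Lemma condP_ge (q : nat) (xpol : nat -> (nat -> 'I_q -> {set I}) -> {set I} -> R)
    (omega : nat -> 'I_q -> {set I}) (j : nat) (i : I) :
  (forall i, Defs.cover w k x i <= 1) -> 0 < fnorm w k x ->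
  xpol j omega = x -> i \in Sset omega j.-1 ->
  1 - q%:R / fnorm w k x <= condP w k xpol omega j i.
Proof.
move=> cover_le1 F_gt0 x_j i_alive; rewrite (condP_closed x_j i_alive).
set F := fnorm w k x; set c := Defs.cover w k x i.
have c_ge0 : 0 <= c by apply: sumr_ge0 => C _; exact: x_frac.2.
have -> : (F - c) / F = 1 - c / F by rewrite mulrBl mulfV ?gt_eqF.
have cF_le1 : c / F <= 1 by rewrite ler_pdivrMr // mul1r cover_le_fnorm.
apply: le_trans (bernoulli_ineq q cF_le1).
have qc_le_q : q%:R * c <= q%:R by apply: ler_piMr; [exact: ler0n | exact: cover_le1].
have Finv_ge0 : 0 <= F^-1 by rewrite invr_ge0 ltW.
rewrite mulrA; have := ler_wpM2r Finv_ge0 qc_le_q; lra.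
Qed.

End FractionalSolution.

Lemma lamstep_le1 (R : realType) (I : finType) (w : I -> R) (k q : nat) (eps : R)
    (xpol : nat -> (nat -> 'I_q -> {set I}) -> {set I} -> R) (j : nat)
    (g : I -> R) (omega : nat -> 'I_q -> {set I}) (i : I) :
  (forall i, i \in Sset omega j.-1 ->
     0 < (1 - j%:R * eps) / (1 - (j.-1)%:R * eps) <= condP w k xpol omega j i) ->
  g i <= 1 -> lamstep w k eps xpol j g omega i <= 1.
Proof.
move=> shrink_le g_le1; rewrite /lamstep; case: ifP => [i_alive|_]; last exact: ler01.
have /andP[r_gt0 r_le] := shrink_le i i_alive.
have c_gt0 := lt_le_trans r_gt0 r_le.
set f := _ / _ / condP _ _ _ _ _ _.
have f_ge0 : 0 <= f by rewrite divr_ge0 ?ltW.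
have f_le1 : f <= 1 by rewrite ler_pdivrMr // mul1r.
nra.
Qed.

Section IterativeRounding.
Variables (R : realType) (I : finType) (w v : I -> R) (m k : nat) (eps : R) (N q : nat)
  (xpol : nat -> (nat -> 'I_q -> {set I}) -> {set I} -> R).
Hypotheses (m_gt0 : (0 < m)%N) (eps_gt0 : 0 < eps)
  (N2_eq : (N ^ 2)%:R = eps^-1 :> R) (q_eq : q%:R = eps * m%:R).
Hypothesis x_approx : forall j (omega : nat -> 'I_q -> {set I}), (1 <= j <= N ^ 2)%N ->
  LP_approx w v k eps (Sset omega j.-1) (m%:R * (1 - (j.-1)%:R * eps)) (xpol j omega).

Lemma budget_lt1 (j : nat) : (j < N ^ 2)%N -> j%:R * eps < 1.
Proof.
move=> j_lt; have : j%:R < eps^-1 by rewrite -N2_eq ltr_nat.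
by rewrite -(ltr_pM2r eps_gt0) mulVf ?gt_eqF.
Qed.

(* Key estimate: in iteration [j] the factor (1 - j eps) / (1 - (j-1) eps)
   equals [1 - q / ||x^j||], hence is dominated by the survival probability. *)
Lemma shrink_le_condP (j : nat) (omega : nat -> 'I_q -> {set I}) (i : I) :
  (1 <= j < N ^ 2)%N -> i \in Sset omega j.-1 ->
  0 < (1 - j%:R * eps) / (1 - (j.-1)%:R * eps) <= condP w k xpol omega j i.
Proof.
case/andP=> j_ge1 j_lt i_alive.
have j_eq : j%:R = (j.-1)%:R + 1 :> R by rewrite natr1 prednK.
have := budget_lt1 j_lt; rewrite j_eq => budget.
set a := (j.-1)%:R : R in j_eq budget *.
have a_ge0 : 0 <= a by rewrite ler0n.
have rest_gt0 : 0 < 1 - a * eps by nra.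
have m_pos : 0 < m%:R :> R by rewrite ltr0n.
have j_range : (1 <= j <= N ^ 2)%N by rewrite j_ge1 ltnW.
have [[[x_frac x_cover] [_ x_norm]] _] := x_approx omega j_range.
have F_gt0 : 0 < fnorm w k (xpol j omega) by rewrite x_norm mulr_gt0.
have cover_le1 i' : Defs.cover w k (xpol j omega) i' <= 1 by case/andP: (x_cover i').
have := condP_ge x_frac cover_le1 F_gt0 (erefl _) i_alive.
rewrite x_norm q_eq.
have -> : 1 - eps * m%:R / (m%:R * (1 - a * eps)) = (1 - (a + 1) * eps) / (1 - a * eps).
  by field; rewrite !gt_eqF.
move=> r_le; apply/andP; split => //; apply: divr_gt0 => //; lra.
Qed.

Lemma gam_le1 (Sstar : {set I}) (j : nat) (omega : nat -> 'I_q -> {set I}) (i : I) :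
  (j < N ^ 2)%N -> gam w k eps xpol Sstar j omega i <= 1.
Proof.
elim: j i => [|j IHj] i j_lt /=; first by case: (i \in Sstar); rewrite ?ler01.
case: (i \in Sset omega j.+1); rewrite ?mul0r ?ler01 // mul1r.
apply: lamstep_le1 => [i' i_alive|]; last by apply: IHj; rewrite ltnW.
exact: shrink_le_condP.
Qed.

Lemma lam_le1 (Sstar : {set I}) (j : nat) (omega : nat -> 'I_q -> {set I}) (i : I) :
  (1 <= j < N ^ 2)%N -> lam w k eps xpol Sstar j omega i <= 1.
Proof.
case: j => [//|j] /= j_lt.
apply: lamstep_le1 => [i' i_alive|]; last by apply: gam_le1; rewrite ltnW.
exact: shrink_le_condP.
Qed.

End IterativeRounding.

Unset Implicit Arguments.
Theorem lemma4p6 (R : realType) (I : finType) (w v : I -> R) (m k : nat)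
  (eps : R) (N q : nat)
  (Cstar : 'I_m -> {set I})
  (xpol : nat -> (nat -> 'I_q -> {set I}) -> {set I} -> R) :
  (forall i, 0 <= w i <= 1) ->
  (forall i, 0 <= v i) ->
  (0 < m)%N -> (0 < k)%N ->
  0 < eps < 1 / 10 ->
  Num.sqrt (eps^-1) = N%:R ->
  expR (expR (eps ^- 30)) < m%:R ->
  q%:R = eps * m%:R ->
  (forall b, config w k (Cstar b)) ->
  (forall D : 'I_m -> {set I}, (forall b, config w k (D b)) ->
     vset v (\bigcup_(b < m) D b) <= vset v (\bigcup_(b < m) Cstar b)) ->
  (forall j (omega omega' : nat -> 'I_q -> {set I}),
     (forall j', (j' < j)%N -> omega j' = omega' j') ->
     xpol j omega = xpol j omega') ->
  (forall j (omega : nat -> 'I_q -> {set I}), (1 <= j <= N ^ 2)%N ->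
     LP_approx w v k eps (Sset omega j.-1) (m%:R * (1 - (j.-1)%:R * eps))
       (xpol j omega)) ->
  forall j, (1 <= j <= N ^ 2 - 1)%N ->
  forall (omega : nat -> 'I_q -> {set I}) (i : I),
    lam w k eps xpol (\bigcup_(b < m) Cstar b) j omega i <= 1 /\
    gam w k eps xpol (\bigcup_(b < m) Cstar b) j omega i <= 1.
Proof.
move=> _ _ m_gt0 _ /andP[eps_gt0 _] sqrt_eq _ q_eq _ _ _ x_approx j /andP[j_ge1 j_le] omega i.
have N2_eq : (N ^ 2)%:R = eps^-1 :> R.
  by rewrite natrX -sqrt_eq sqr_sqrtr // invr_ge0 ltW.
have j_lt : (j < N ^ 2)%N.
  by move: j_ge1 j_le; lia.
split.
- by apply: (lam_le1 m_gt0 eps_gt0 N2_eq q_eq x_approx); rewrite j_ge1.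
- exact: (gam_le1 m_gt0 eps_gt0 N2_eq q_eq x_approx).
Qed.
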